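(* Let $(X,e\colon X\to M\otimes X)$ be a coalgebra for $F$ on $\mathbf{Met_3}^{C}$. Then there is at most one morphism $h\colon X\to S$ in $\mathbf{Met_3}^{C}$ with $s\circ h=(M\otimes h)\circ e$; in particular, the map $f\colon X\to S$, $f(x)=\lim_{n\to\infty}\theta_n(x)$ (where $\chi_0=x$, $\chi_n=(M^{n-1}\otimes e)(\chi_{n-1})=m_0\otimes\cdots\otimes m_{n-1}\otimes x_n$ and $\theta_n(x)=m_0\otimes\cdots\otimes m_{n-1}\otimes z\in G$ for a fixed $z\in\{T,L,R\}$), is the unique such morphism.
   Context: A tripointed metric space is a set with three distinct points $T,L,R$ and a metric bounded by $1$ in which $T,L,R$ have pairwise distance $1$. $\mathbf{Met_3}^{C}$: tripointed metric spaces with continuous maps preserving $T,L,R$. Let $M=\{a,b,c\}$. $M\times X$ has metric $\tfrac12d(x,y)$ within a copy and $1$ between copies; $M\otimes X$ is the quotient metric space by the equivalence relation generated by $(b,T)\sim(a,L)$, $(a,R)\sim(c,T)$, $(c,L)\sim(b,R)$, elements $m\otimes x$, distinguished points $a\otimes T,b\otimes L,c\otimes R$; $F=M\otimes-$, $(M\otimes f)(m\otimes x)=m\otimes f(x)$; $M^n\otimes-$ is the $n$-fold iterate. A coalgebra is $(X,e\colon X\to FX)$. With $I=\{T,L,R\}$ discrete and $!\colon I\to FI$ ($T\mapsto a\otimes T$, $L\mapsto b\otimes L$, $R\mapsto c\otimes R$), $G$ is the metric union of the chain of isometric embeddings $I\to FI\to F^2I\to\cdots$, and $g\colon M\otimes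 G\to G$, $g(m\otimes w)=m\otimes w$, is a bijective isometry. $S$ is the Cauchy completion of $G$ (distinguished points $T,L,R$); completing $g$ gives a bijective isometry $\psi\colon M\otimes S\to S$, and $s=\psi^{-1}$. The map $f$ above is well defined, continuous, and satisfies $s\circ f=(M\otimes f)\circ e$. *)

From Stdlib Require Import Reals Lra Lia Relations ClassicalEpsilon Eqdep_dec Arith.
Open Scope R_scope.

Inductive Mlab : Type := ma | mb | mc.

Definition Mlab_eqb (m m' : Mlab) : bool :=
  match m, m' with ma, ma | mb, mb | mc, mc => true | _, _ => false end.

Record pre3 : Type := Pre3 {
  car :> Type;
  dist : car -> car -> R;
  pT : car; pL : car; pR : car }.
Arguments dist {_} _ _.
Arguments pT {_}. Arguments pL {_}. Arguments pR {_}.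

Definition is_metric (A : Type) (d : A -> A -> R) : Prop :=
  (forall x y, 0 <= d x y) /\
  (forall x y, d x y = 0 <-> x = y) /\
  (forall x y, d x y = d y x) /\
  (forall x y z, d x z <= d x y + d y z).

Definition is_tri_met (X : pre3) : Prop :=
  is_metric (car X) (@dist X) /\
  (forall x y : car X, dist x y <= 1) /\
  dist (@pT X) (@pL X) = 1 /\ dist (@pL X) (@pR X) = 1 /\ dist (@pT X) (@pR X) = 1.

Definition continuous_map (X Y : pre3) (f : car X -> car Y) : Prop :=
  forall x eps, 0 < eps -> exists delta, 0 < delta /\
    forall y, dist x y < delta -> dist (f x) (f y) < eps.

Definition morphism3 (X Y : pre3) (f : car X -> car Y) : Prop :=
  continuous_map X Y f /\ f pT = pT /\ f pL = pL /\ f pR = pR.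

Definition quot (A : Type) (r : A -> A -> Prop) : Type :=
  { P : A -> Prop | exists a, P = r a }.
Definition qcl {A : Type} (r : A -> A -> Prop) (a : A) : quot A r :=
  exist _ (r a) (ex_intro _ a eq_refl).
Definition qrep {A : Type} {r : A -> A -> Prop} (q : quot A r) : A :=
  proj1_sig (constructive_indefinite_description _ (proj2_sig q)).

Definition is_glb (E : R -> Prop) (m : R) : Prop :=
  (forall v, E v -> m <= v) /\ (forall b, (forall v, E v -> b <= v) -> b <= m).
Definition Rinf (E : R -> Prop) : R := epsilon (inhabits 0) (is_glb E).

(** The quotient (pseudo)metric: infimum of the lengths of chains
    p_0 ~ x, q_0 ~ p_1, ..., q_n ~ y, length = sum_i d(p_i,q_i). *)
Definition chain_sums {A : Type} (d : A -> A -> R) (r : A -> A -> Prop)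
  (P Q : A -> Prop) : R -> Prop :=
  fun v => exists (n : nat) (p q : nat -> A),
    P (p 0%nat) /\ Q (q n) /\ (forall i, (i < n)%nat -> r (q i) (p (S i))) /\
    v = sum_f_R0 (fun i => d (p i) (q i)) n.
Definition qdist {A : Type} (d : A -> A -> R) (r : A -> A -> Prop)
  (x y : quot A r) : R :=
  Rinf (chain_sums d r (proj1_sig x) (proj1_sig y)).

Inductive glue (X : pre3) : Mlab * car X -> Mlab * car X -> Prop :=
| glue1 : glue X (mb, pT) (ma, pL)
| glue2 : glue X (ma, pR) (mc, pT)
| glue3 : glue X (mc, pL) (mb, pR).
Definition geq (X : pre3) := clos_refl_sym_trans _ (glue X).

Definition dprod (X : pre3) (u v : Mlab * car X) : R :=
  if Mlab_eqb (fst u) (fst v) then dist (snd u) (snd v) / 2 else 1.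

Definition Mtensor (X : pre3) : pre3 :=
  {| car := quot (Mlab * car X) (geq X);
     dist := qdist (dprod X) (geq X);
     pT := qcl (geq X) (ma, pT);
     pL := qcl (geq X) (mb, pL);
     pR := qcl (geq X) (mc, pR) |}.

Definition Mtmap (X Y : pre3) (f : car X -> car Y) (q : car (Mtensor X))
  : car (Mtensor Y) :=
  qcl (geq Y) (fst (qrep q), f (snd (qrep q))).

Inductive Ipt : Type := iT | iL | iR.
Definition Ipt_eqb (x y : Ipt) : bool :=
  match x, y with iT, iT | iL, iL | iR, iR => true | _, _ => false end.
Definition I3 : pre3 := Pre3 Ipt (fun x y => if Ipt_eqb x y then 0 else 1) iT iL iR.

Definition bang (x : Ipt) : car (Mtensor I3) :=
  match x with
  | iT => qcl (geq I3) (ma, iT)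
  | iL => qcl (geq I3) (mb, iL)
  | iR => qcl (geq I3) (mc, iR)
  end.

Fixpoint Fiter (n : nat) : pre3 :=
  match n with 0 => I3 | S k => Mtensor (Fiter k) end.

Fixpoint emb (n : nat) : car (Fiter n) -> car (Fiter (S n)) :=
  match n with
  | 0 => bang
  | S k => Mtmap (Fiter k) (Fiter (S k)) (emb k)
  end.

Fixpoint lift (k n : nat) : car (Fiter n) -> car (Fiter (k + n)) :=
  match k with
  | 0 => fun x => x
  | S j => fun x => emb (j + n) (lift j n x)
  end.

Inductive Gstep : {n : nat & car (Fiter n)} -> {n : nat & car (Fiter n)} -> Prop :=
| gstep n x : Gstep (existT _ n x) (existT _ (S n) (emb n x)).
Definition Geq := clos_refl_sym_trans _ Gstep.

Definition Gdist_raw (u v : {n : nat & car (Fiter n)}) : R :=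
  let (n, x) := u in let (m, y) := v in
  dist (lift m n x)
       (eq_rect _ (fun k => car (Fiter k)) (lift n m y) _ (Nat.add_comm n m)).

Definition G : pre3 :=
  {| car := quot {n : nat & car (Fiter n)} Geq;
     dist := fun a b => Gdist_raw (qrep a) (qrep b);
     pT := qcl Geq (existT _ 0%nat iT);
     pL := qcl Geq (existT _ 0%nat iL);
     pR := qcl Geq (existT _ 0%nat iR) |}.

Definition gmap (q : car (Mtensor G)) : car G :=
  let (m, w) := qrep q in
  let (n, x) := qrep w in
  qcl Geq (existT (fun k => car (Fiter k)) (S n) (qcl (geq (Fiter n)) (m, x))).

Lemma glb_exists (E : R -> Prop) :
  (exists v, E v) -> (forall v, E v -> 0 <= v) -> exists m, is_glb E m.
Proof.
  intros [v0 Hv0] Hpos.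
  destruct (completeness (fun w => E (- w))) as [l [Hl1 Hl2]].
  - exists 0. intros w Hw. specialize (Hpos _ Hw). lra.
  - exists (- v0). rewrite Ropp_involutive. exact Hv0.
  - exists (- l). split.
    + intros v Hv. assert (- v <= l). { apply Hl1. rewrite Ropp_involutive. exact Hv. } lra.
    + intros b Hb. assert (l <= - b). { apply Hl2. intros w Hw. specialize (Hb _ Hw). lra. } lra.
Qed.

Lemma Rinf_spec (E : R -> Prop) : (exists m, is_glb E m) -> is_glb E (Rinf E).
Proof. intros H. unfold Rinf. apply epsilon_spec. exact H. Qed.

Lemma qcl_self {A} (r : A -> A -> Prop) (P : quot A r) :
  (forall a, r a a) -> exists a, proj1_sig P a.
Proof. destruct P as [P [a Ha]]. intros Hr. exists a. simpl. rewrite Ha. apply Hr. Qed.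

Lemma Mtensor_basic (X : pre3) :
  (forall x y : car X, 0 <= dist x y) -> (forall x : car X, dist x x = 0) ->
  (forall x y : car (Mtensor X), 0 <= dist x y) /\ (forall x : car (Mtensor X), dist x x = 0).
Proof.
  intros Hpos Hself.
  assert (Hd : forall u v, 0 <= dprod X u v).
  { intros u v. unfold dprod. destruct (Mlab_eqb _ _).
    - specialize (Hpos (snd u) (snd v)). lra.
    - lra. }
  assert (Hr : forall a, geq X a a) by (intros a; apply rst_refl).
  assert (Hlow : forall P Q v, chain_sums (dprod X) (geq X) P Q v -> 0 <= v).
  { intros P Q v [n [p [q [_ [_ [_ ->]]]]]]. apply cond_pos_sum. intros; apply Hd. }
  split.
  - intros x y. simpl. unfold qdist.
    destruct (qcl_self _ x Hr) as [a Ha]. destruct (qcl_self _ y Hr) as [b Hb].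
    assert (Hex : exists m, is_glb (chain_sums (dprod X) (geq X) (proj1_sig x) (proj1_sig y)) m).
    { apply glb_exists.
      - exists (sum_f_R0 (fun i => dprod X ((fun _ => a) i) ((fun _ => b) i)) 0).
        exists 0%nat, (fun _ => a), (fun _ => b).
        split; [exact Ha|]. split; [exact Hb|]. split; [intros i Hi; lia|]. reflexivity.
      - intros v Hv. exact (Hlow _ _ _ Hv). }
    destruct (Rinf_spec _ Hex) as [_ H2]. apply H2. intros v Hv. exact (Hlow _ _ _ Hv).
  - intros x. simpl. unfold qdist.
    destruct (qcl_self _ x Hr) as [a Ha].
    assert (H0 : chain_sums (dprod X) (geq X) (proj1_sig x) (proj1_sig x) 0).
    { exists 0%nat, (fun _ => a), (fun _ => a).
      split; [exact Ha|]. split; [exact Ha|]. split; [intros i Hi; lia|].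
      simpl. unfold dprod. destruct a as [m xa]; destruct m; simpl; rewrite Hself; lra. }
    assert (Hex : exists m, is_glb (chain_sums (dprod X) (geq X) (proj1_sig x) (proj1_sig x)) m).
    { exists 0. split.
      - intros v Hv. exact (Hlow _ _ _ Hv).
      - intros b Hb. apply Hb. exact H0. }
    destruct (Rinf_spec _ Hex) as [H1 H2].
    apply Rle_antisym.
    + apply H1. exact H0.
    + apply H2. intros v Hv. exact (Hlow _ _ _ Hv).
Qed.

Lemma Fiter_basic (n : nat) :
  (forall x y : car (Fiter n), 0 <= dist x y) /\ (forall x : car (Fiter n), dist x x = 0).
Proof.
  induction n as [|n [IH1 IH2]].
  - split.
    + intros x y. simpl. destruct (Ipt_eqb x y); lra.
    + intros x. destruct x; simpl; reflexivity.
  - apply Mtensor_basic; assumption.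
Qed.

Lemma G_self (w : car G) : dist w w = 0.
Proof.
  simpl. destruct (qrep w) as [n x]. unfold Gdist_raw.
  generalize (Nat.add_comm n n). intro E. rewrite (UIP_refl_nat _ E). simpl.
  apply (proj2 (Fiter_basic (n + n))).
Qed.

Definition cauchy {A : Type} (d : A -> A -> R) (u : nat -> A) : Prop :=
  forall eps, 0 < eps -> exists N : nat, forall m n : nat,
    (N <= m)%nat -> (N <= n)%nat -> d (u m) (u n) < eps.

Definition CSeq : Type := { u : nat -> car G | cauchy (@dist G) u }.
Definition Srel (u v : CSeq) : Prop :=
  Un_cv (fun k => dist (proj1_sig u k) (proj1_sig v k)) 0.
Definition Rlim (u : nat -> R) : R := epsilon (inhabits 0) (Un_cv u).

Lemma const_cauchy (w : car G) : cauchy (@dist G) (fun _ => w).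
Proof. intros eps Heps. exists 0%nat. intros m n _ _. rewrite G_self. exact Heps. Qed.

Definition constG (w : car G) : CSeq := exist _ (fun _ => w) (const_cauchy w).

Definition S3 : pre3 :=
  {| car := quot CSeq Srel;
     dist := fun a b => Rlim (fun k => dist (proj1_sig (qrep a) k) (proj1_sig (qrep b) k));
     pT := qcl Srel (constG pT);
     pL := qcl Srel (constG pL);
     pR := qcl Srel (constG pR) |}.

Definition embS (w : car G) : car S3 := qcl Srel (constG w).

(** psi : M (x) S -> S, the completion of g:
    psi(m (x) [u_k]) = [g(m (x) u_k)]; here as its graph. *)
Definition psi_rel (p : car (Mtensor S3)) (t : car S3) : Prop :=
  let (m, sg) := qrep p in
  Un_cv (fun k => dist (gmap (qcl (geq G) (m, proj1_sig (qrep sg) k)))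
                       (proj1_sig (qrep t) k)) 0.

(** s = psi^{-1} *)
Definition sinv (t : car S3) : car (Mtensor S3) :=
  epsilon (inhabits (@pT (Mtensor S3))) (fun p => psi_rel p t).

Fixpoint traj (X : pre3) (e : car X -> car (Mtensor X)) (x : car X) (n : nat) : car X :=
  match n with 0 => x | S k => snd (qrep (e (traj X e x k))) end.
Definition lab (X : pre3) (e : car X -> car (Mtensor X)) (x : car X) (n : nat) : Mlab :=
  fst (qrep (e (traj X e x n))).

Fixpoint word (z : Ipt) (ms : nat -> Mlab) (n : nat) : car (Fiter n) :=
  match n with
  | 0 => z
  | S k => qcl (geq (Fiter k)) (ms 0%nat, word z (fun i => ms (S i)) k)
  end.

Definition theta (X : pre3) (e : car X -> car (Mtensor X)) (z : Ipt) (n : nat)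
  (x : car X) : car S3 :=
  embS (qcl Geq (existT (fun k => car (Fiter k)) n (word z (lab X e x) n))).

(** The quotient distance on [M (x) X] has a closed form, [tdist]: half the distance inside
    a copy and, across copies, the shorter of two routes through glued points.  Hence
    [g : M (x) G -> G], and its completion [psi : M (x) S -> S], halve distances within a copy.
    A morphism [h] with [s o h = (M (x) h) o e] satisfies [h x = psi (m (x) h x')] where
    [e x = m (x) x'], so two of them are at distance at most [2^-n] for every [n].
    For existence, the words [m_0 (x) ... (x) m_(n-1) (x) z] read off the orbit of [x] form a
    Cauchy sequence with [2^-n] steps, whose limit [f x] solves the equation.  Continuity of
    [f] is an induction on [n]: near a vertex, [e] stays in one copy, so the oscillation of
    [f] halves; near any other point [x], either [e] stays in the copy of [x], or both tails
    lie near the common vertex of two copies, where the vertex bound applies. *)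

From Stdlib Require Import Reals Lra Lia Relations ClassicalEpsilon Eqdep_dec.
From Stdlib Require Import FunctionalExtensionality PropExtensionality ProofIrrelevance Classical.
From Pilot Require Import Defs.
Open Scope R_scope.

Section Quotients.
Context {A : Type} (r : relation A).

Lemma qrep_spec (q : quot A r) : proj1_sig q = r (qrep q).
Proof.
  unfold qrep. destruct (constructive_indefinite_description _ _) as [a Ha]. exact Ha.
Qed.

Lemma qcl_qrep (q : quot A r) : qcl r (qrep q) = q.
Proof.
  pose proof (qrep_spec q) as H. destruct q as [P HP]. simpl in H.
  set (a := qrep _) in *. clearbody a. subst P. unfold qcl. f_equal. apply proof_irrelevance.
Qed.

Lemma qcl_sound (a b : A) : equivalence A r -> r a b -> qcl r a = qcl r b.
Proof.
  intros [Hr Ht Hs] Hab.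
  assert (E : r a = r b).
  { apply functional_extensionality. intro x. apply propositional_extensionality.
    split; intro H; eauto. }
  unfold qcl. generalize (ex_intro (fun a0 => r a = r a0) a eq_refl).
  generalize (ex_intro (fun a0 => r b = r a0) b eq_refl). rewrite E. intros. f_equal.
  apply proof_irrelevance.
Qed.

Lemma qcl_exact (a b : A) : reflexive A r -> qcl r a = qcl r b -> r a b.
Proof. intros Hr H. apply (f_equal (@proj1_sig _ _)) in H. simpl in H. rewrite H. apply Hr. Qed.

Lemma qrep_qcl (a : A) : reflexive A r -> r a (qrep (qcl r a)).
Proof. intros Hr. pose proof (qrep_spec (qcl r a)) as H. simpl in H. rewrite H. apply Hr. Qed.

End Quotients.

Lemma rst_invariant {A B : Type} (r : relation A) (f : A -> B) :
  (forall u v, r u v -> f u = f v) ->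
  forall u v, clos_refl_sym_trans A r u v -> f u = f v.
Proof. intros H u v Huv. induction Huv; auto. congruence. Qed.

Lemma Un_cv_const c : Un_cv (fun _ => c) c.
Proof. intros eps He. exists 0%nat. intros. unfold Rdist. rewrite Rminus_diag, Rabs_R0. lra. Qed.

Lemma Un_cv_ext (a b : nat -> R) l : (forall n, a n = b n) -> Un_cv a l -> Un_cv b l.
Proof.
  intros E H eps He. destruct (H eps He) as [N HN]. exists N. intros n Hn. rewrite <- E. auto.
Qed.

Lemma Un_cv_half (a : nat -> R) l : Un_cv a l -> Un_cv (fun n => a n / 2) (l / 2).
Proof. intros H. apply (CV_mult a (fun _ => / 2)); [exact H | apply Un_cv_const]. Qed.

Lemma Un_cv_squeeze0 (a b : nat -> R) : (forall n, 0 <= a n <= b n) -> Un_cv b 0 -> Un_cv a 0.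
Proof.
  intros Hab Hb eps He. destruct (Hb eps He) as [N HN]. exists N. intros n Hn.
  specialize (HN n Hn). specialize (Hab n). unfold Rdist in *. rewrite Rminus_0_r in *.
  rewrite Rabs_right in * by lra. lra.
Qed.

Lemma Un_cv_Rmin (a b : nat -> R) la lb :
  Un_cv a la -> Un_cv b lb -> Un_cv (fun n => Rmin (a n) (b n)) (Rmin la lb).
Proof.
  intros Ha Hb eps He. destruct (Ha eps He) as [N1 H1], (Hb eps He) as [N2 H2].
  exists (N1 + N2)%nat. intros n Hn. specialize (H1 n ltac:(lia)). specialize (H2 n ltac:(lia)).
  unfold Rdist in *. apply Rabs_def2 in H1, H2. apply Rabs_def1;
  unfold Rmin; destruct (Rle_dec (a n) (b n)); destruct (Rle_dec la lb); lra.
Qed.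

Lemma Rlim_eq a l : Un_cv a l -> Rlim a = l.
Proof.
  intros H. apply (UL_sequence a); [|exact H]. unfold Rlim. apply epsilon_spec. exists l; exact H.
Qed.

Lemma Un_cv_pow_half : Un_cv (fun n => / 2 ^ n) 0.
Proof.
  apply (Un_cv_ext (fun n => 1 / 2 ^ n)); [|apply cv_pow_half].
  intros n. field. apply pow_nonzero. lra.
Qed.

Lemma Un_cv_close (a b : nat -> R) l :
  Un_cv b l -> Un_cv (fun n => Rabs (a n - b n)) 0 -> Un_cv a l.
Proof.
  intros Hb Hab. apply (Un_cv_ext (fun n => (a n - b n) + b n)); [intros; ring|].
  replace l with (0 + l) by ring. apply CV_plus; [|exact Hb].
  intros eps He. destruct (Hab eps He) as [N HN]. exists N. intros n Hn.
  specialize (HN n Hn). unfold Rdist in *. rewrite !Rminus_0_r, Rabs_Rabsolu in *. exact HN.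
Qed.

Lemma inv_pow2_pos n : 0 < / 2 ^ n.
Proof. apply Rinv_0_lt_compat, pow_lt. lra. Qed.

Lemma inv_pow2_S n : / 2 ^ S n = / 2 ^ n / 2.
Proof. cbn [pow]. rewrite Rinv_mult. lra. Qed.

Lemma inv_pow2_small eps : 0 < eps -> exists n, 2 * / 2 ^ n < eps.
Proof.
  intros He. destruct (Un_cv_pow_half (eps / 2) ltac:(lra)) as [n Hn]. exists n.
  specialize (Hn n (le_n n)). unfold Rdist in Hn. rewrite Rminus_0_r, Rabs_right in Hn.
  - lra.
  - apply Rle_ge, Rlt_le, inv_pow2_pos.
Qed.

Lemma le_inv_pow2_eq0 a : 0 <= a -> (forall n, a <= / 2 ^ n) -> a = 0.
Proof.
  intros Ha H. apply Rle_antisym; [|exact Ha].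
  apply (Rle_cv_lim H (Un_cv_const a) Un_cv_pow_half).
Qed.

Definition pt (Y : pre3) (i : Ipt) : car Y :=
  match i with iT => pT | iL => pL | iR => pR end.

Definition preserves_pts (X Y : pre3) (h : car X -> car Y) : Prop :=
  forall i, h (pt X i) = pt Y i.

Lemma morphism3_pts X Y h : morphism3 X Y h -> preserves_pts X Y h.
Proof. intros [_ [HT [HL HR]]] []; assumption. Qed.

Record tri_pmet (Y : pre3) : Prop := {
  dist_ge0 : forall x y : car Y, 0 <= dist x y;
  dist_xx : forall x : car Y, dist x x = 0;
  dist_sym : forall x y : car Y, dist x y = dist y x;
  dist_tri : forall x y z : car Y, dist x z <= dist x y + dist y z;
  dist_le1 : forall x y : car Y, dist x y <= 1;
  dist_pt : forall i j, dist (pt Y i) (pt Y j) = if Ipt_eqb i j then 0 else 1 }.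

Lemma is_tri_met_pmet X : is_tri_met X -> tri_pmet X.
Proof.
  intros [[Hpos [Hz [Hsym Htri]]] [Hle [HTL [HLR HTR]]]].
  assert (Hxx : forall x : car X, dist x x = 0) by (intros x; apply Hz; reflexivity).
  constructor; auto.
  intros [] []; cbn; rewrite ?Hxx; auto; rewrite Hsym; auto.
Qed.

Lemma dist_diff_le Y (HY : tri_pmet Y) (a b c d : car Y) :
  Rabs (dist a b - dist c d) <= dist a c + dist b d.
Proof.
  pose proof (dist_tri _ HY a c b). pose proof (dist_tri _ HY c a d).
  pose proof (dist_tri _ HY a b d). pose proof (dist_tri _ HY c d b).
  rewrite (dist_sym _ HY c a), (dist_sym _ HY d b) in *. apply Rabs_le. lra.
Qed.

Lemma dist_geometric_le Y (HY : tri_pmet Y) (a : nat -> car Y) :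
  (forall k, dist (a k) (a (S k)) <= / 2 ^ k) ->
  forall i j, (i <= j)%nat -> dist (a i) (a j) <= 2 * / 2 ^ i.
Proof.
  intros H i j Hij.
  assert (K : forall n, dist (a i) (a (i + n)%nat) <= 2 * / 2 ^ i - 2 * / 2 ^ (i + n)).
  { induction n as [|n IH].
    - rewrite Nat.add_0_r, (dist_xx _ HY). lra.
    - pose proof (dist_tri _ HY (a i) (a (i + n)%nat) (a (i + S n)%nat)).
      rewrite <- plus_n_Sm in *. pose proof (H (i + n)%nat). rewrite inv_pow2_S. lra. }
  replace j with (i + (j - i))%nat by lia. pose proof (K (j - i)%nat).
  pose proof (inv_pow2_pos (i + (j - i))). lra.
Qed.

(** * The distance on [M (x) X] *)

(** Copy [m] of [M (x) X] meets copy [m'] in [m (x) pt (vtx m') ~ m' (x) pt (vtx m)];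
    the distinguished point of [M (x) X] in copy [m] is [m (x) pt (vtx m)]. *)
Definition vtx (m : Mlab) : Ipt := match m with ma => iT | mb => iL | mc => iR end.

Definition third (m m' : Mlab) : Mlab :=
  match m, m' with
  | ma, mb | mb, ma => mc | ma, mc | mc, ma => mb | _, _ => ma end.

(** Closed form of the quotient distance on [M (x) X] ([Mtensor_dist]): within a copy, half
    the distance; across copies, the shorter of the routes through their common point and
    through the two common points of the third copy, which are [1/2] apart. *)
Definition tdist {A : Type} (d : A -> A -> R) (p : Ipt -> A) (u v : Mlab * A) : R :=
  let (m, x) := u in let (m', y) := v in
  if Mlab_eqb m m' then d x y / 2
  else Rmin ((d x (p (vtx m')) + d y (p (vtx m))) / 2)
            ((d x (p (vtx (third m m'))) + 1 + d y (p (vtx (third m m')))) / 2).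

Notation tdist_on Y := (tdist (@dist Y) (pt Y)).

Lemma Mlab_eqb_spec m m' : reflect (m = m') (Mlab_eqb m m').
Proof. destruct m, m'; constructor; congruence. Qed.

Lemma Mlab_eqb_refl m : Mlab_eqb m m = true.
Proof. destruct m; reflexivity. Qed.

Lemma Mlab_eqb_neq m m' : m <> m' -> Mlab_eqb m m' = false.
Proof. destruct (Mlab_eqb_spec m m'); congruence. Qed.

Lemma tdist_same {A} d (p : Ipt -> A) m x y : tdist d p (m, x) (m, y) = d x y / 2.
Proof. destruct m; reflexivity. Qed.

Lemma tdist_cross {A} d (p : Ipt -> A) m x m' y : m <> m' ->
  tdist d p (m, x) (m', y) =
  Rmin ((d x (p (vtx m')) + d y (p (vtx m))) / 2)
       ((d x (p (vtx (third m m'))) + 1 + d y (p (vtx (third m m')))) / 2).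
Proof. intros Hne. cbn [tdist]. rewrite Mlab_eqb_neq by exact Hne. reflexivity. Qed.

Lemma tdist_map {A B} (d : A -> A -> R) (d' : B -> B -> R) (h : A -> B) p m x m' y :
  (forall a b, d' (h a) (h b) = d a b) ->
  tdist d' (fun i => h (p i)) (m, h x) (m', h y) = tdist d p (m, x) (m', y).
Proof. intros Hd. cbn. rewrite !Hd. reflexivity. Qed.

Ltac rmin :=
  unfold Rmin in *;
  repeat match goal with |- context [Rle_dec ?a ?b] => destruct (Rle_dec a b) end.

Ltac dist_pt_bounds H x :=
  pose proof (dist_ge0 _ H x pT); pose proof (dist_ge0 _ H x pL); pose proof (dist_ge0 _ H x pR);
  pose proof (dist_le1 _ H x pT); pose proof (dist_le1 _ H x pL); pose proof (dist_le1 _ H x pR).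

Ltac pt_dists H :=
  let f i j := (let E := fresh in pose proof (dist_pt _ H i j) as E; cbn [pt Ipt_eqb] in E) in
  f iT iT; f iT iL; f iT iR; f iL iT; f iL iL; f iL iR; f iR iT; f iR iL; f iR iR.

Lemma chain_sum_ge {A : Type} (d : A -> A -> R) (r : relation A) (phi : A -> R) a b v :
  (forall x y, r x y -> phi x = phi y) -> (forall x y, phi y <= phi x + d x y) ->
  chain_sums d r (r a) (r b) v -> phi b - phi a <= v.
Proof.
  intros Hinv Hlip [n [p [q [Hp [Hq [Hc ->]]]]]].
  assert (K : forall k, (k <= n)%nat ->
    phi (q k) - phi (p 0%nat) <= sum_f_R0 (fun i => d (p i) (q i)) k).
  { induction k as [|k IH]; intros Hk; cbn.
    - pose proof (Hlip (p 0%nat) (q 0%nat)). lra.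
    - pose proof (Hinv _ _ (Hc k Hk)). pose proof (Hlip (p (S k)) (q (S k))).
      pose proof (IH ltac:(lia)). lra. }
  pose proof (K n (le_n n)). rewrite (Hinv _ _ Hp), (Hinv _ _ Hq). lra.
Qed.

Lemma Rinf_is_glb (E : R -> Prop) :
  (exists v, E v) -> (forall v, E v -> 0 <= v) -> is_glb E (Rinf E).
Proof. intros Hne Hpos. apply Rinf_spec, glb_exists; assumption. Qed.

Lemma qdist_glb {A : Type} (d : A -> A -> R) (r : relation A) a b :
  (forall x y, 0 <= d x y) -> reflexive A r ->
  is_glb (chain_sums d r (r a) (r b)) (qdist d r (qcl r a) (qcl r b)).
Proof.
  intros Hpos Hr. apply Rinf_is_glb.
  - exists (sum_f_R0 (fun _ => d a b) 0), 0%nat, (fun _ => a), (fun _ => b).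
    split; [apply Hr|]. split; [apply Hr|]. split; [intros; lia | reflexivity].
  - intros v [n [p [q [_ [_ [_ ->]]]]]]. apply cond_pos_sum. intros; apply Hpos.
Qed.

Lemma vtx_surj i : exists m, vtx m = i.
Proof. destruct i; [exists ma | exists mb | exists mc]; reflexivity. Qed.

Lemma Mtensor_pt Y m : pt (Mtensor Y) (vtx m) = qcl (geq Y) (m, pt Y (vtx m)).
Proof. destruct m; reflexivity. Qed.

Lemma tdist_cross_le {A} (d : A -> A -> R) p m x m' y : m <> m' ->
  tdist d p (m, x) (m', y) <= (d x (p (vtx m')) + d y (p (vtx m))) / 2.
Proof.
  intros Hne. rewrite tdist_cross by exact Hne. apply Rmin_l.
Qed.

Section TensorDistance.
Variable Y : pre3.
Hypothesis HY : tri_pmet Y.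

Lemma tdist_ge0 u v : 0 <= tdist_on Y u v.
Proof.
  destruct u as [m x], v as [m' y]. cbn. destruct (Mlab_eqb m m').
  - pose proof (dist_ge0 _ HY x y). lra.
  - dist_pt_bounds HY x. dist_pt_bounds HY y. destruct m, m'; cbn; rmin; lra.
Qed.

Lemma tdist_le1 u v : tdist_on Y u v <= 1.
Proof.
  destruct u as [m x], v as [m' y]. cbn. destruct (Mlab_eqb m m').
  - pose proof (dist_le1 _ HY x y). lra.
  - dist_pt_bounds HY x. dist_pt_bounds HY y. destruct m, m'; cbn; rmin; lra.
Qed.

Lemma tdist_sym u v : tdist_on Y u v = tdist_on Y v u.
Proof.
  destruct u as [m x], v as [m' y]. pose proof (dist_sym _ HY x y).
  destruct m, m'; cbn; rmin; lra.
Qed.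

Lemma tdist_lip_r w m y y' : tdist_on Y w (m, y) <= tdist_on Y w (m, y') + dist y' y / 2.
Proof.
  destruct w as [m0 x]. cbn. pose proof (dist_sym _ HY y y'). destruct (Mlab_eqb m0 m).
  - pose proof (dist_tri _ HY x y' y). lra.
  - pose proof (dist_tri _ HY y y' (pt Y (vtx m0))).
    pose proof (dist_tri _ HY y y' (pt Y (vtx (third m0 m)))). rmin; lra.
Qed.

Lemma tdist_glue_r w u v : glue Y u v -> tdist_on Y w u = tdist_on Y w v.
Proof.
  destruct w as [m0 x]. dist_pt_bounds HY x. pt_dists HY.
  intros Hg; destruct Hg; destruct m0; cbn; rmin; lra.
Qed.

Lemma geq_vtx m m' : m <> m' -> geq Y (m, pt Y (vtx m')) (m', pt Y (vtx m)).
Proof.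
  intros Hne; unfold geq; destruct m, m'; try congruence.
  - apply rst_sym, rst_step, glue1.
  - apply rst_step, glue2.
  - apply rst_step, glue1.
  - apply rst_sym, rst_step, glue3.
  - apply rst_sym, rst_step, glue2.
  - apply rst_step, glue3.
Qed.

Lemma dprod_ge0 u v : 0 <= dprod Y u v.
Proof.
  unfold dprod. destruct (Mlab_eqb _ _); [pose proof (dist_ge0 _ HY (snd u) (snd v))|]; lra.
Qed.

(** A chain realising each of the two routes of [tdist]. *)
Lemma Mtensor_dist_le u v : @dist (Mtensor Y) (qcl (geq Y) u) (qcl (geq Y) v) <= tdist_on Y u v.
Proof.
  destruct (qdist_glb (dprod Y) (geq Y) u v dprod_ge0 (rst_refl _ _)) as [Hlb _].
  destruct u as [m x], v as [m' y]. destruct (Mlab_eqb_spec m m') as [<-|Hne].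
  - rewrite tdist_same. apply Hlb. exists 0%nat, (fun _ => (m, x)), (fun _ => (m, y)).
    split; [apply rst_refl|]. split; [apply rst_refl|]. split; [intros; lia|].
    cbn. unfold dprod. rewrite Mlab_eqb_refl. reflexivity.
  - rewrite tdist_cross by exact Hne. set (k := third m m').
    assert (Hk : k <> m /\ k <> m') by (unfold k; destruct m, m'; cbn; split; congruence).
    rmin; apply Hlb.
    + exists 1%nat, (fun i => match i with 0%nat => (m, x) | _ => (m', pt Y (vtx m)) end),
        (fun i => match i with 0%nat => (m, pt Y (vtx m')) | _ => (m', y) end).
      split; [apply rst_refl|]. split; [apply rst_refl|].
      split; [intros [|i] Hi; [apply geq_vtx; auto | lia]|].
      cbn. unfold dprod. cbn. rewrite !Mlab_eqb_refl.
      rewrite (dist_sym _ HY (pt Y (vtx m)) y). lra.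
    + exists 2%nat, (fun i => match i with 0%nat => (m, x) | 1%nat => (k, pt Y (vtx m))
                                       | _ => (m', pt Y (vtx k)) end),
        (fun i => match i with 0%nat => (m, pt Y (vtx k)) | 1%nat => (k, pt Y (vtx m'))
                                       | _ => (m', y) end).
      split; [apply rst_refl|]. split; [apply rst_refl|].
      split.
      * intros [|[|i]] Hi; [apply geq_vtx; intuition congruence
                           | apply geq_vtx; intuition congruence | lia].
      * cbn. unfold dprod. cbn. rewrite !Mlab_eqb_refl.
        rewrite (dist_pt _ HY), (dist_sym _ HY (pt Y (vtx k)) y).
        replace (Ipt_eqb (vtx m) (vtx m')) with false by (destruct m, m'; cbn; congruence).
        fold k. lra.
Qed.

(** [tdist_on Y w] is constant on glued pairs and [1/2]-Lipschitz within a copy, so it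
    bounds the length of every chain from below. *)
Lemma Mtensor_dist_ge w u v :
  tdist_on Y w v - tdist_on Y w u <= @dist (Mtensor Y) (qcl (geq Y) u) (qcl (geq Y) v).
Proof.
  destruct (qdist_glb (dprod Y) (geq Y) u v dprod_ge0 (rst_refl _ _)) as [_ Hglb].
  apply Hglb. intros s Hs. apply (chain_sum_ge (dprod Y) (geq Y) (tdist_on Y w) u v s); auto.
  - apply rst_invariant. intros; apply tdist_glue_r; auto.
  - intros [m1 y1] [m2 y2]. unfold dprod; cbn. destruct (Mlab_eqb_spec m1 m2) as [<-|_].
    + apply tdist_lip_r.
    + pose proof (tdist_le1 w (m2, y2)). pose proof (tdist_ge0 w (m1, y1)). lra.
Qed.

Theorem Mtensor_dist u v : @dist (Mtensor Y) (qcl (geq Y) u) (qcl (geq Y) v) = tdist_on Y u v.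
Proof.
  apply Rle_antisym; [apply Mtensor_dist_le|].
  pose proof (Mtensor_dist_ge u u v) as H. destruct u. rewrite tdist_same, (dist_xx _ HY) in H. lra.
Qed.

Lemma tdist_tri u v w : tdist_on Y u w <= tdist_on Y u v + tdist_on Y v w.
Proof. pose proof (Mtensor_dist_ge u v w). rewrite Mtensor_dist in H. lra. Qed.

Lemma Mtensor_dist_rep (p q : car (Mtensor Y)) : dist p q = tdist_on Y (qrep p) (qrep q).
Proof. rewrite <- Mtensor_dist, !qcl_qrep. reflexivity. Qed.

Theorem Mtensor_pmet : tri_pmet (Mtensor Y).
Proof.
  constructor; intros; rewrite ?Mtensor_dist_rep.
  - apply tdist_ge0.
  - destruct (qrep x). rewrite tdist_same, (dist_xx _ HY). lra.
  - apply tdist_sym.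
  - apply tdist_tri.
  - apply tdist_le1.
  - rewrite <- Mtensor_dist_rep.
    destruct (vtx_surj i) as [m <-], (vtx_surj j) as [m' <-].
    rewrite !Mtensor_pt, Mtensor_dist. pt_dists HY. destruct m, m'; cbn; rmin; lra.
Qed.

Lemma tdist_cross_lt_half m x m' y : m <> m' -> tdist_on Y (m, x) (m', y) < 1 / 2 ->
  tdist_on Y (m, x) (m', y) = (dist x (pt Y (vtx m')) + dist y (pt Y (vtx m))) / 2.
Proof.
  intros Hne. rewrite tdist_cross by exact Hne.
  pose proof (dist_ge0 _ HY x (pt Y (vtx (third m m')))).
  pose proof (dist_ge0 _ HY y (pt Y (vtx (third m m')))).
  rmin; lra.
Qed.

Lemma tdist_vertex_cross m m' y : m <> m' -> 1 / 2 <= tdist_on Y (m, pt Y (vtx m)) (m', y).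
Proof.
  intros Hne.
  destruct (Rlt_le_dec (tdist_on Y (m, pt Y (vtx m)) (m', y)) (1 / 2)) as [Hlt|]; [|assumption].
  rewrite (tdist_cross_lt_half _ _ _ _ Hne Hlt), (dist_pt _ HY).
  replace (Ipt_eqb (vtx m) (vtx m')) with false by (destruct m, m'; cbn; congruence).
  pose proof (dist_ge0 _ HY y (pt Y (vtx m))). lra.
Qed.


Lemma geq_vertex m v : geq Y (m, pt Y (vtx m)) v -> v = (m, pt Y (vtx m)).
Proof.
  set (v0 := (m, pt Y (vtx m))).
  assert (Hne : @pT Y <> pL /\ @pL Y <> pR /\ @pT Y <> pR).
  { pt_dists HY. repeat split; intros E; rewrite E in *; lra. }
  assert (K : forall a b, geq Y a b -> (a = v0 <-> b = v0)).
  { induction 1 as [a b Hg| | |]; try tauto.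
    destruct Hg; unfold v0; destruct m; cbn; split; intros E; inversion E; intuition congruence. }
  intros Hv. apply (K _ _ Hv). reflexivity.
Qed.

Lemma qrep_vertex m :
  qrep (qcl (geq Y) (m, pt Y (vtx m))) = (m, pt Y (vtx m)).
Proof. apply geq_vertex, qrep_qcl. intros ?; apply rst_refl. Qed.
End TensorDistance.

Definition isometry (X Y : pre3) (h : car X -> car Y) : Prop :=
  forall x y, dist (h x) (h y) = dist x y.

Section Functoriality.
Variables X Y : pre3.
Variable h : car X -> car Y.
Hypothesis Hh : preserves_pts X Y h.

Lemma geq_map u v : geq X u v -> geq Y (fst u, h (snd u)) (fst v, h (snd v)).
Proof.
  pose proof (Hh iT) as HT; pose proof (Hh iL) as HL; pose proof (Hh iR) as HR; cbn in HT, HL, HR.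
  induction 1 as [u v Hg| | |].
  - destruct Hg; cbn; rewrite ?HT, ?HL, ?HR; apply rst_step; constructor.
  - apply rst_refl.
  - apply rst_sym; auto.
  - eapply rst_trans; eauto.
Qed.

Lemma Mtmap_qcl m x : Mtmap X Y h (qcl (geq X) (m, x)) = qcl (geq Y) (m, h x).
Proof.
  unfold Mtmap. pose proof (qrep_qcl (geq X) (m, x) (rst_refl _ _)) as Hq.
  destruct (qrep (qcl (geq X) (m, x))) as [m' x']. symmetry.
  apply qcl_sound; [apply clos_rst_is_equiv|]. exact (geq_map (m, x) (m', x') Hq).
Qed.

Lemma Mtmap_pts : preserves_pts (Mtensor X) (Mtensor Y) (Mtmap X Y h).
Proof.
  intros i. destruct (vtx_surj i) as [m <-]. rewrite !Mtensor_pt, Mtmap_qcl, Hh. reflexivity.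
Qed.

Lemma Mtmap_isometry : tri_pmet X -> tri_pmet Y -> isometry X Y h ->
  isometry (Mtensor X) (Mtensor Y) (Mtmap X Y h).
Proof.
  intros HX HY Hiso p q. rewrite <- (qcl_qrep _ p), <- (qcl_qrep _ q).
  destruct (qrep p) as [m x], (qrep q) as [m' y].
  rewrite !Mtmap_qcl, !Mtensor_dist by assumption.
  replace (pt Y) with (fun i => h (pt X i)) by (apply functional_extensionality; apply Hh).
  apply tdist_map. exact Hiso.
Qed.

End Functoriality.

Lemma I3_pmet : tri_pmet I3.
Proof.
  constructor; cbn.
  - intros [] []; cbn; lra.
  - intros []; reflexivity.
  - intros [] []; reflexivity.
  - intros [] [] []; cbn; lra.
  - intros [] []; cbn; lra.
  - intros [] []; reflexivity.
Qed.

Lemma Fiter_pmet n : tri_pmet (Fiter n).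
Proof. induction n; [apply I3_pmet | apply Mtensor_pmet; assumption]. Qed.

Lemma emb_pts_isometry n :
  preserves_pts (Fiter n) (Fiter (S n)) (emb n) /\ isometry (Fiter n) (Fiter (S n)) (emb n).
Proof.
  induction n as [|n [Hpts Hiso]].
  - split; [intros []; reflexivity|].
    pose proof (dist_pt _ (Fiter_pmet 1)) as H1.
    intros a b. transitivity (dist (pt (Fiter 1) a) (pt (Fiter 1) b)).
    + destruct a, b; reflexivity.
    + rewrite H1. reflexivity.
  - split; [apply Mtmap_pts | apply Mtmap_isometry]; auto using Fiter_pmet.
Qed.

Lemma emb_pts n : preserves_pts (Fiter n) (Fiter (S n)) (emb n).
Proof. apply emb_pts_isometry. Qed.

Lemma emb_isometry n x y : dist (emb n x) (emb n y) = dist x y.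
Proof. apply emb_pts_isometry. Qed.

(** * The union [G] *)

Notation Gel n x := (existT (fun k => car (Fiter k)) n x).

Definition cast {N N' : nat} (E : N = N') (z : car (Fiter N)) : car (Fiter N') :=
  eq_rect N (fun k => car (Fiter k)) z N' E.

Lemma cast_irr N N' (E E' : N = N') z : cast E z = cast E' z.
Proof. rewrite (UIP_dec Nat.eq_dec E E'). reflexivity. Qed.

Lemma cast_refl N (E : N = N) z : cast E z = z.
Proof. rewrite (UIP_dec Nat.eq_dec E eq_refl). reflexivity. Qed.

Lemma cast_cast N1 N2 N3 (E : N1 = N2) (E' : N2 = N3) z :
  cast E' (cast E z) = cast (eq_trans E E') z.
Proof. destruct E, E'. reflexivity. Qed.

Lemma emb_cast N N' (E : N = N') z : emb N' (cast E z) = cast (f_equal S E) (emb N z).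
Proof. destruct E. reflexivity. Qed.

Lemma dist_cast N N' (E : N = N') a b : dist (cast E a) (cast E b) = dist a b.
Proof. destruct E. reflexivity. Qed.

Lemma dist_cast_r N N' (E : N = N') a b :
  @dist (Fiter N') a (cast E b) = dist (cast (eq_sym E) a) b.
Proof. destruct E. reflexivity. Qed.

Lemma cast_pt N N' (E : N = N') i : cast E (pt _ i) = pt _ i.
Proof. destruct E. reflexivity. Qed.

Lemma Gel_cast N N' (E : N = N') z : Gel N' (cast E z) = Gel N z.
Proof. destruct E. reflexivity. Qed.

Lemma lift_isometry k n x y : dist (lift k n x) (lift k n y) = dist x y.
Proof.
  induction k as [|k IH]; [reflexivity|].
  transitivity (dist (lift k n x) (lift k n y)); [apply emb_isometry | exact IH].
Qed.

Lemma lift_pt k n i : lift k n (pt _ i) = pt _ i.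
Proof.
  induction k as [|k IH]; [reflexivity|].
  change (emb (k + n) (lift k n (pt _ i)) = pt _ i). rewrite IH. apply emb_pts.
Qed.

Lemma lift_emb m n x (E : S (m + n) = (m + S n)%nat) :
  lift m (S n) (emb n x) = cast E (emb (m + n) (lift m n x)).
Proof.
  revert E. induction m as [|m IH]; intros E.
  - rewrite cast_refl. reflexivity.
  - cbn [lift]. rewrite (IH (plus_n_Sm m n)), emb_cast. apply cast_irr.
Qed.

Lemma Gdist_raw_Gel n x m y :
  Gdist_raw (Gel n x) (Gel m y) = dist (lift m n x) (cast (Nat.add_comm n m) (lift n m y)).
Proof. reflexivity. Qed.

Lemma Gdist_raw_emb_l n x m y :
  Gdist_raw (Gel (S n) (emb n x)) (Gel m y) = Gdist_raw (Gel n x) (Gel m y).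
Proof.
  rewrite !Gdist_raw_Gel, (lift_emb m n x (plus_n_Sm m n)). cbn [lift].
  assert (A : cast (Nat.add_comm (S n) m) (emb (n + m) (lift n m y)) =
              cast (plus_n_Sm m n) (emb (m + n) (cast (Nat.add_comm n m) (lift n m y)))).
  { rewrite emb_cast, cast_cast. apply cast_irr. }
  rewrite A, dist_cast, emb_isometry. reflexivity.
Qed.

Lemma Gdist_raw_sym u v : Gdist_raw u v = Gdist_raw v u.
Proof.
  destruct u as [n x], v as [m y]. rewrite !Gdist_raw_Gel, dist_cast_r, (dist_sym _ (Fiter_pmet _)).
  f_equal. apply cast_irr.
Qed.

Lemma Gdist_raw_compat u u' v v' : Geq u u' -> Geq v v' -> Gdist_raw u v = Gdist_raw u' v'.
Proof.
  assert (Hl : forall u u' v, Geq u u' -> Gdist_raw u v = Gdist_raw u' v).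
  { intros u0 u0' v0. apply (rst_invariant Gstep (fun w => Gdist_raw w v0)).
    intros a b []. destruct v0. symmetry. apply Gdist_raw_emb_l. }
  intros Hu Hv. rewrite (Hl u u' v Hu), Gdist_raw_sym, (Hl v v' u' Hv). apply Gdist_raw_sym.
Qed.

Definition Gcl n (x : car (Fiter n)) : car G := qcl Geq (Gel n x).

Lemma G_dist_Gcl N x y : @dist G (Gcl N x) (Gcl N y) = dist x y.
Proof.
  transitivity (Gdist_raw (Gel N x) (Gel N y)).
  - symmetry. apply Gdist_raw_compat; apply (qrep_qcl Geq); intros ?; apply rst_refl.
  - rewrite Gdist_raw_Gel, cast_refl. apply lift_isometry.
Qed.

Lemma Gcl_lift k n x : Gcl n x = Gcl (k + n) (lift k n x).
Proof.
  apply qcl_sound; [apply clos_rst_is_equiv|].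
  induction k as [|k IH]; [apply rst_refl|].
  eapply rst_trans; [exact IH|]. apply rst_step, gstep.
Qed.

Lemma Gcl_level (w : car G) : exists n, forall N, (n <= N)%nat -> exists x, w = Gcl N x.
Proof.
  rewrite <- (qcl_qrep _ w). destruct (qrep w) as [n x]. exists n. intros N HN.
  assert (E : (N - n + n)%nat = N) by lia.
  exists (cast E (lift (N - n) n x)). unfold Gcl. rewrite Gel_cast. apply (Gcl_lift (N - n) n x).
Qed.

Lemma G_pt N i : pt G i = Gcl N (pt _ i).
Proof.
  transitivity (Gcl 0 (pt I3 i)); [destruct i; reflexivity|].
  rewrite (Gcl_lift N), lift_pt. unfold Gcl. rewrite <- (Gel_cast _ _ (Nat.add_0_r N)), cast_pt.
  reflexivity.
Qed.

Lemma Gcl_common_level (w1 w2 w3 : car G) :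
  exists N x1 x2 x3, w1 = Gcl N x1 /\ w2 = Gcl N x2 /\ w3 = Gcl N x3.
Proof.
  destruct (Gcl_level w1) as [n1 H1], (Gcl_level w2) as [n2 H2], (Gcl_level w3) as [n3 H3].
  destruct (H1 (n1 + n2 + n3)%nat) as [x1 ->]; [lia|].
  destruct (H2 (n1 + n2 + n3)%nat) as [x2 ->]; [lia|].
  destruct (H3 (n1 + n2 + n3)%nat) as [x3 ->]; [lia|].
  exists (n1 + n2 + n3)%nat, x1, x2, x3. auto.
Qed.

Lemma G_pmet : tri_pmet G.
Proof.
  pose proof Gcl_common_level as L3.
  constructor.
  - intros x y. destruct (L3 x y x) as [N [a [b [_ [-> [-> _]]]]]].
    rewrite G_dist_Gcl. apply dist_ge0, Fiter_pmet.
  - intros x. destruct (L3 x x x) as [N [a [_ [_ [-> _]]]]].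
    rewrite G_dist_Gcl. apply dist_xx, Fiter_pmet.
  - intros x y. destruct (L3 x y x) as [N [a [b [_ [-> [-> _]]]]]].
    rewrite !G_dist_Gcl. apply dist_sym, Fiter_pmet.
  - intros x y z. destruct (L3 x y z) as [N [a [b [c [-> [-> ->]]]]]].
    rewrite !G_dist_Gcl. apply dist_tri, Fiter_pmet.
  - intros x y. destruct (L3 x y x) as [N [a [b [_ [-> [-> _]]]]]].
    rewrite G_dist_Gcl. apply dist_le1, Fiter_pmet.
  - intros i j. rewrite !(G_pt 0), G_dist_Gcl. apply (dist_pt _ I3_pmet).
Qed.

Definition Gcons (m : Mlab) (u : {n : nat & car (Fiter n)}) : {n : nat & car (Fiter n)} :=
  let (n, x) := u in Gel (S n) (qcl (geq (Fiter n)) (m, x)).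

Lemma Gcons_compat m u u' : Geq u u' -> Geq (Gcons m u) (Gcons m u').
Proof.
  induction 1 as [u u' [n x]| | |].
  - apply rst_step. cbn [Gcons].
    rewrite <- (Mtmap_qcl _ _ (emb n) (emb_pts n)). apply (gstep (S n)).
  - apply rst_refl.
  - apply rst_sym; auto.
  - eapply rst_trans; eauto.
Qed.

Lemma Geq_qrep_pt i : Geq (Gel 0%nat (pt I3 i)) (qrep (pt G i)).
Proof. destruct i; apply (qrep_qcl Geq); intros ?; apply rst_refl. Qed.

(** [g] is well defined: the glued points of [M (x) G] are images of those of [M (x) I]. *)
Lemma geq_Gcons p p' :
  geq G p p' -> Geq (Gcons (fst p) (qrep (snd p))) (Gcons (fst p') (qrep (snd p'))).
Proof.
  induction 1 as [p p' Hg| | |]; [| apply rst_refl | apply rst_sym; auto | eapply rst_trans; eauto].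
  assert (K : forall m i m' j, glue I3 (m, pt I3 i) (m', pt I3 j) ->
             Geq (Gcons m (qrep (pt G i))) (Gcons m' (qrep (pt G j)))).
  { intros m i m' j Hij.
    eapply rst_trans; [apply rst_sym, Gcons_compat, Geq_qrep_pt|].
    eapply rst_trans; [|apply Gcons_compat, Geq_qrep_pt]. cbn [Gcons].
    lazymatch goal with |- _ (existT _ _ ?a) (existT _ _ ?b) => replace a with b end;
      [apply rst_refl|].
    symmetry. apply qcl_sound; [apply clos_rst_is_equiv | apply rst_step, Hij]. }
  destruct Hg; [apply (K mb iT ma iL) | apply (K ma iR mc iT) | apply (K mc iL mb iR)]; constructor.
Qed.

Lemma gmap_Gcl m n x : gmap (qcl (geq G) (m, Gcl n x)) = Gcl (S n) (qcl (geq (Fiter n)) (m, x)).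
Proof.
  transitivity (qcl Geq (Gcons m (qrep (Gcl n x)))).
  - unfold gmap. pose proof (geq_Gcons _ _ (qrep_qcl (geq G) (m, Gcl n x) (rst_refl _ _))) as H.
    destruct (qrep (qcl (geq G) (m, Gcl n x))) as [m' w']. cbn [fst snd] in H.
    destruct (qrep w') as [k y]. symmetry.
    apply qcl_sound; [apply clos_rst_is_equiv|]. exact H.
  - apply qcl_sound; [apply clos_rst_is_equiv|].
    apply rst_sym, (Gcons_compat m (Gel n x)), (qrep_qcl Geq). intros ?; apply rst_refl.
Qed.

Lemma gmap_dist m w m' w' :
  @dist G (gmap (qcl (geq G) (m, w))) (gmap (qcl (geq G) (m', w'))) = tdist_on G (m, w) (m', w').
Proof.
  destruct (Gcl_common_level w w' w) as [N [a [b [_ [-> [-> _]]]]]].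
  rewrite !gmap_Gcl, G_dist_Gcl.
  transitivity (tdist_on (Fiter N) (m, a) (m', b)); [apply Mtensor_dist, Fiter_pmet|].
  replace (pt G) with (fun i => Gcl N (pt _ i))
    by (apply functional_extensionality; intros; symmetry; apply G_pt).
  symmetry. apply tdist_map, G_dist_Gcl.
Qed.

Lemma gmap_surj (w : car G) : exists m w', w = gmap (qcl (geq G) (m, w')).
Proof.
  destruct (Gcl_level w) as [n Hn]. destruct (Hn (S n)) as [x ->]; [lia|].
  rewrite <- (qcl_qrep _ x). destruct (qrep x) as [m y]. exists m, (Gcl n y).
  rewrite gmap_Gcl. reflexivity.
Qed.

Lemma gmap_pt m : gmap (qcl (geq G) (m, pt G (vtx m))) = pt G (vtx m).
Proof.
  rewrite (G_pt 0%nat), gmap_Gcl, <- Mtensor_pt, (Gcl_lift 1%nat 0%nat (pt _ _)). cbn [lift].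
  rewrite (emb_pts 0%nat). reflexivity.
Qed.



(** * The completion [S] and the map [psi] *)

Lemma Cauchy_dist (u v : CSeq) : Cauchy_crit (fun k => dist (proj1_sig u k) (proj1_sig v k)).
Proof.
  destruct u as [u Hu], v as [v Hv]. intros eps He. cbn [proj1_sig].
  destruct (Hu (eps/2) ltac:(lra)) as [N1 H1], (Hv (eps/2) ltac:(lra)) as [N2 H2].
  exists (N1 + N2)%nat. intros n m Hn Hm. unfold Rdist.
  pose proof (dist_diff_le G G_pmet (u n) (v n) (u m) (v m)).
  specialize (H1 n m ltac:(lia) ltac:(lia)). specialize (H2 n m ltac:(lia) ltac:(lia)). lra.
Qed.

Lemma Srel_equiv : equivalence CSeq Srel.
Proof.
  constructor; unfold Srel.
  - intros u. apply (Un_cv_ext (fun _ => 0)); [intros; symmetry; apply (dist_xx _ G_pmet)|].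
    apply Un_cv_const.
  - intros u v w H1 H2.
    apply (Un_cv_squeeze0 _ _
             (fun n => conj (dist_ge0 _ G_pmet _ _) (dist_tri _ G_pmet _ (proj1_sig v n) _))).
    replace 0 with (0 + 0) by ring. apply CV_plus; assumption.
  - intros u v H. apply (Un_cv_ext _ _ 0 (fun n => dist_sym _ G_pmet _ _) H).
Qed.

Lemma Un_cv_dist_Srel (u u' v v' : CSeq) l : Srel u u' -> Srel v v' ->
  Un_cv (fun k => dist (proj1_sig u' k) (proj1_sig v' k)) l ->
  Un_cv (fun k => dist (proj1_sig u k) (proj1_sig v k)) l.
Proof.
  intros Hu Hv H. apply (Un_cv_close _ _ l H).
  apply (Un_cv_squeeze0 _ (fun k => dist (proj1_sig u k) (proj1_sig u' k) +
                                    dist (proj1_sig v k) (proj1_sig v' k))).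
  - intros k. split; [apply Rabs_pos | apply dist_diff_le, G_pmet].
  - replace 0 with (0 + 0) by ring. apply CV_plus; assumption.
Qed.

Lemma S_dist_cv (u v : CSeq) :
  Un_cv (fun k => dist (proj1_sig u k) (proj1_sig v k)) (@dist S3 (qcl Srel u) (qcl Srel v)).
Proof.
  pose proof (qrep_qcl Srel u (equiv_refl _ _ Srel_equiv)) as Hu.
  pose proof (qrep_qcl Srel v (equiv_refl _ _ Srel_equiv)) as Hv.
  destruct (R_complete _ (Cauchy_dist (qrep (qcl Srel u)) (qrep (qcl Srel v)))) as [l Hl].
  cbn [dist S3]. rewrite (Rlim_eq _ l Hl). exact (Un_cv_dist_Srel _ _ _ _ l Hu Hv Hl).
Qed.

Lemma S_eq_dist0 (s t : car S3) : dist s t = 0 -> s = t.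
Proof.
  rewrite <- (qcl_qrep _ s), <- (qcl_qrep _ t). intros H.
  apply qcl_sound; [apply Srel_equiv|]. unfold Srel. rewrite <- H. apply S_dist_cv.
Qed.

Lemma S_pt i : pt S3 i = embS (pt G i).
Proof. destruct i; reflexivity. Qed.

Lemma S_pmet : tri_pmet S3.
Proof.
  assert (Hcv : forall s t : car S3,
    Un_cv (fun k => dist (proj1_sig (qrep s) k) (proj1_sig (qrep t) k)) (dist s t)).
  { intros s t. pose proof (S_dist_cv (qrep s) (qrep t)) as H. rewrite !qcl_qrep in H. exact H. }
  constructor.
  - intros s t. apply (Rle_cv_lim (fun n => dist_ge0 _ G_pmet _ _) (Un_cv_const 0) (Hcv s t)).
  - intros s. apply (UL_sequence _ _ _ (Hcv s s)).
    apply (Un_cv_ext (fun _ => 0)); [|apply Un_cv_const].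
    intros; symmetry; apply (dist_xx _ G_pmet).
  - intros s t. apply (UL_sequence _ _ _ (Hcv s t)).
    apply (Un_cv_ext _ _ _ (fun k => dist_sym _ G_pmet _ _) (Hcv t s)).
  - intros s t w. refine (Rle_cv_lim _ (Hcv s w) (CV_plus _ _ _ _ (Hcv s t) (Hcv t w))).
    intros n. apply (dist_tri _ G_pmet).
  - intros s t. apply (Rle_cv_lim (fun n => dist_le1 _ G_pmet _ _) (Hcv s t) (Un_cv_const 1)).
  - intros i j. rewrite !S_pt. apply (UL_sequence _ _ _ (S_dist_cv _ _)).
    rewrite <- (dist_pt _ G_pmet). exact (Un_cv_const (dist (pt G i) (pt G j))).
Qed.

Lemma gmap_same m a b :
  @dist G (gmap (qcl (geq G) (m, a))) (gmap (qcl (geq G) (m, b))) = dist a b / 2.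
Proof. rewrite gmap_dist, tdist_same. reflexivity. Qed.

Lemma gmap_seq_cauchy m (u : CSeq) :
  cauchy (@dist G) (fun k => gmap (qcl (geq G) (m, proj1_sig u k))).
Proof.
  destruct u as [u Hu]. intros eps He. destruct (Hu eps He) as [N HN]. exists N.
  intros i j Hi Hj. cbn [proj1_sig]. rewrite gmap_same.
  specialize (HN i j Hi Hj). pose proof (dist_ge0 _ G_pmet (u i) (u j)). lra.
Qed.

Definition gmap_seq (m : Mlab) (u : CSeq) : CSeq :=
  exist _ (fun k => gmap (qcl (geq G) (m, proj1_sig u k))) (gmap_seq_cauchy m u).

Definition Psi (m : Mlab) (s : car S3) : car S3 := qcl Srel (gmap_seq m (qrep s)).

Definition psi (p : car (Mtensor S3)) : car S3 := Psi (fst (qrep p)) (snd (qrep p)).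

Lemma gmap_seq_Srel m u v : Srel u v -> Srel (gmap_seq m u) (gmap_seq m v).
Proof.
  unfold Srel. intros H. cbn [proj1_sig gmap_seq].
  apply (Un_cv_ext (fun k => dist (proj1_sig u k) (proj1_sig v k) / 2)).
  - intros k. symmetry. apply gmap_same.
  - replace 0 with (0 / 2) by field. apply Un_cv_half, H.
Qed.

Lemma Psi_qcl m u : Psi m (qcl Srel u) = qcl Srel (gmap_seq m u).
Proof.
  apply qcl_sound; [apply Srel_equiv|]. apply gmap_seq_Srel.
  apply (equiv_sym _ _ Srel_equiv), qrep_qcl, Srel_equiv.
Qed.

Lemma tdist_cv {A B : Type} (dA : A -> A -> R) (dB : B -> B -> R) pA pB
  (x y : nat -> A) x0 y0 m m' :
  Un_cv (fun k => dA (x k) (y k)) (dB x0 y0) ->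
  (forall i, Un_cv (fun k => dA (x k) (pA i)) (dB x0 (pB i))) ->
  (forall i, Un_cv (fun k => dA (y k) (pA i)) (dB y0 (pB i))) ->
  Un_cv (fun k => tdist dA pA (m, x k) (m', y k)) (tdist dB pB (m, x0) (m', y0)).
Proof.
  intros Hxy Hx Hy. cbn. destruct (Mlab_eqb m m').
  - apply Un_cv_half, Hxy.
  - apply Un_cv_Rmin; apply Un_cv_half; repeat apply CV_plus; auto using Un_cv_const.
Qed.

Lemma S_dist_embS (u : CSeq) (w : car G) :
  Un_cv (fun k => dist (proj1_sig u k) w) (@dist S3 (qcl Srel u) (embS w)).
Proof. apply (S_dist_cv u (constG w)). Qed.

Theorem Psi_dist m s m' s' : dist (Psi m s) (Psi m' s') = tdist_on S3 (m, s) (m', s').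
Proof.
  rewrite <- (qcl_qrep _ s), <- (qcl_qrep _ s'). set (u := qrep s). set (v := qrep s').
  rewrite !Psi_qcl.
  apply (UL_sequence (fun k => dist (proj1_sig (gmap_seq m u) k) (proj1_sig (gmap_seq m' v) k)));
    [apply S_dist_cv|].
  apply (Un_cv_ext (fun k => tdist_on G (m, proj1_sig u k) (m', proj1_sig v k))).
  { intros k. symmetry. apply gmap_dist. }
  apply tdist_cv; [apply S_dist_cv | intros i; rewrite S_pt; apply S_dist_embS ..].
Qed.

Lemma Psi_glue p p' : glue S3 p p' -> Psi (fst p) (snd p) = Psi (fst p') (snd p').
Proof.
  intros H. apply S_eq_dist0. rewrite Psi_dist. pt_dists S_pmet.
  destruct H; cbn [tdist vtx third pt Mlab_eqb fst snd]; rmin; lra.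
Qed.

Lemma psi_qcl m s : psi (qcl (geq S3) (m, s)) = Psi m s.
Proof.
  unfold psi. pose proof (qrep_qcl (geq S3) (m, s) (rst_refl _ _)) as H.
  symmetry. exact (rst_invariant (glue S3) (fun p => Psi (fst p) (snd p)) Psi_glue _ _ H).
Qed.

Lemma psi_rel_iff p t : psi_rel p t <-> psi p = t.
Proof.
  unfold psi_rel, psi. destruct (qrep p) as [m s]. cbn [fst snd].
  change (Srel (gmap_seq m (qrep s)) (qrep t) <-> Psi m s = t). unfold Psi. split.
  - intros H. rewrite <- (qcl_qrep _ t). apply qcl_sound; [apply Srel_equiv | exact H].
  - intros H. apply (qcl_exact Srel); [apply Srel_equiv|]. rewrite H. symmetry. apply qcl_qrep.
Qed.

Lemma label_infinitely_often (f : nat -> Mlab) :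
  exists m, forall N, exists k, (N <= k)%nat /\ f k = m.
Proof.
  apply NNPP. intros Hno.
  assert (Hfin : forall m, exists N, forall k, (N <= k)%nat -> f k <> m).
  { intros m. apply NNPP. intros Hm. apply Hno. exists m. intros N. apply NNPP. intros HN.
    apply Hm. exists N. intros k Hk E. apply HN. eauto. }
  destruct (Hfin ma) as [Na Ha], (Hfin mb) as [Nb Hb], (Hfin mc) as [Nc Hc].
  set (k := (Na + Nb + Nc)%nat).
  destruct (f k) eqn:E; [apply (Ha k) | apply (Hb k) | apply (Hc k)]; auto; unfold k; lia.
Qed.

(** Some copy [m] contains infinitely many terms of a representative of [t]; on that copy [g]
    halves distances, so those terms come from a Cauchy sequence [w] and [t = psi (m (x) [w])]. *)
Lemma psi_surj t : exists p, psi p = t.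
Proof.
  set (u := proj1_sig (qrep t)).
  destruct (choice (fun k p => u k = gmap (qcl (geq G) p))) as [P HP].
  { intros k. destruct (gmap_surj (u k)) as [m [w E]]. exists (m, w). exact E. }
  destruct (label_infinitely_often (fun k => fst (P k))) as [m Hm].
  destruct (choice (fun j k => (j <= k)%nat /\ fst (P k) = m) Hm) as [sg Hsg].
  set (w := fun j => snd (P (sg j))).
  assert (Hu : forall j, u (sg j) = gmap (qcl (geq G) (m, w j))).
  { intros j. rewrite HP. unfold w. destruct (Hsg j) as [_ <-]. destruct (P (sg j)); reflexivity. }
  assert (Hw : cauchy (@dist G) w).
  { intros eps He. destruct (proj2_sig (qrep t) (eps/2) ltac:(lra)) as [N HN]. exists N.
    intros i j Hi Hj. pose proof (gmap_same m (w i) (w j)) as E. rewrite <- !Hu in E.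
    destruct (Hsg i), (Hsg j). specialize (HN (sg i) (sg j) ltac:(lia) ltac:(lia)).
    fold u in HN. lra. }
  exists (qcl (geq S3) (m, qcl Srel (exist _ w Hw))). rewrite psi_qcl, Psi_qcl.
  rewrite <- (qcl_qrep _ t). apply qcl_sound; [apply Srel_equiv|].
  intros eps He. destruct (proj2_sig (qrep t) eps He) as [N HN]. exists N.
  intros k Hk. unfold Rdist. rewrite Rminus_0_r. cbn [proj1_sig gmap_seq]. rewrite <- Hu.
  destruct (Hsg k). rewrite Rabs_right by apply Rle_ge, (dist_ge0 _ G_pmet).
  apply HN; lia.
Qed.

Lemma psi_sinv t : psi (sinv t) = t.
Proof.
  apply psi_rel_iff. unfold sinv. apply epsilon_spec.
  destruct (psi_surj t) as [p Hp]. exists p. apply psi_rel_iff, Hp.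
Qed.

Lemma Psi_inj m s m' s' : Psi m s = Psi m' s' -> qcl (geq S3) (m, s) = qcl (geq S3) (m', s').
Proof.
  intros H. assert (H0 : tdist_on S3 (m, s) (m', s') = 0).
  { rewrite <- Psi_dist, H. apply (dist_xx _ S_pmet). }
  destruct (Mlab_eqb_spec m m') as [<-|Hne].
  - rewrite tdist_same in H0. assert (s = s') as -> by (apply S_eq_dist0; lra). reflexivity.
  - rewrite (tdist_cross_lt_half S3 S_pmet _ _ _ _ Hne) in H0 by lra.
    pose proof (dist_ge0 _ S_pmet s (pt S3 (vtx m'))).
    pose proof (dist_ge0 _ S_pmet s' (pt S3 (vtx m))).
    assert (s = pt S3 (vtx m')) as -> by (apply S_eq_dist0; lra).
    assert (s' = pt S3 (vtx m)) as -> by (apply S_eq_dist0; lra).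
    apply qcl_sound; [apply clos_rst_is_equiv | apply geq_vtx, Hne].
Qed.

Lemma psi_inj p p' : psi p = psi p' -> p = p'.
Proof.
  unfold psi. intros H. rewrite <- (qcl_qrep _ p), <- (qcl_qrep _ p').
  destruct (qrep p) as [m s], (qrep p') as [m' s']. apply Psi_inj, H.
Qed.



(** * Addresses *)

Definition word_seq (z : Ipt) (ms : nat -> Mlab) (k : nat) : car G := Gcl k (word z ms k).

Lemma word_seq_S z ms k :
  word_seq z ms (S k) = gmap (qcl (geq G) (ms 0%nat, word_seq z (fun i => ms (S i)) k)).
Proof. unfold word_seq. rewrite gmap_Gcl. reflexivity. Qed.

Lemma word_seq_step z k : forall ms, dist (word_seq z ms k) (word_seq z ms (S k)) <= / 2 ^ k.
Proof.
  induction k as [|k IH]; intros ms.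
  - rewrite pow_O, Rinv_1. apply (dist_le1 _ G_pmet).
  - rewrite (word_seq_S z ms k), (word_seq_S z ms (S k)), gmap_same, inv_pow2_S.
    specialize (IH (fun i => ms (S i))). lra.
Qed.

Lemma word_seq_le z ms i j :
  (i <= j)%nat -> dist (word_seq z ms i) (word_seq z ms j) <= 2 * / 2 ^ i.
Proof. apply dist_geometric_le; [apply G_pmet | intros; apply word_seq_step]. Qed.

Lemma word_seq_cauchy z ms : cauchy (@dist G) (word_seq z ms).
Proof.
  intros eps He. destruct (inv_pow2_small eps He) as [N HN]. exists N. intros i j Hi Hj.
  assert (Hmono : forall k, (N <= k)%nat -> 2 * / 2 ^ k <= 2 * / 2 ^ N).
  { intros k Hk. apply Rmult_le_compat_l; [lra|]. apply Rinv_le_contravar; [apply pow_lt; lra|].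
    apply Rle_pow; [lra | exact Hk]. }
  destruct (Nat.le_ge_cases i j) as [Hij|Hji].
  - pose proof (word_seq_le z ms i j Hij). pose proof (Hmono i Hi). lra.
  - pose proof (word_seq_le z ms j i Hji). pose proof (Hmono j Hj).
    rewrite (dist_sym _ G_pmet). lra.
Qed.

Definition word_lim (z : Ipt) (ms : nat -> Mlab) : car S3 :=
  qcl Srel (exist _ (word_seq z ms) (word_seq_cauchy z ms)).

Lemma word_seq_cv z ms : Un_cv (fun n => dist (embS (word_seq z ms n)) (word_lim z ms)) 0.
Proof.
  apply (Un_cv_squeeze0 _ (fun n => 2 * / 2 ^ n)).
  - intros n. split; [apply (dist_ge0 _ S_pmet)|].
    rewrite (dist_sym _ S_pmet). unfold word_lim.
    refine (Rle_cv_lim (Un := fun k => dist (word_seq z ms (k + n)) (word_seq z ms n))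
      (Vn := fun _ => 2 * / 2 ^ n) _ _ (Un_cv_const _)).
    + intros k. rewrite (dist_sym _ G_pmet). apply word_seq_le. lia.
    + apply (CV_shift' (fun k => dist (word_seq z ms k) (word_seq z ms n))).
      exact (S_dist_embS (exist _ (word_seq z ms) (word_seq_cauchy z ms)) (word_seq z ms n)).
  - replace 0 with (2 * 0) by ring. apply CV_mult; [apply Un_cv_const | apply Un_cv_pow_half].
Qed.

Lemma word_lim_cons z ms : Psi (ms 0%nat) (word_lim z (fun i => ms (S i))) = word_lim z ms.
Proof.
  unfold word_lim. rewrite Psi_qcl. apply qcl_sound; [apply Srel_equiv|].
  apply (Un_cv_squeeze0 _ (fun n => / 2 ^ n)); [|apply Un_cv_pow_half].
  intros k. cbn [proj1_sig gmap_seq]. rewrite <- word_seq_S, (dist_sym _ G_pmet).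
  split; [apply (dist_ge0 _ G_pmet) | apply word_seq_step].
Qed.

Lemma word_lim_const z m : word_lim z (fun _ => m) = pt S3 (vtx m).
Proof.
  apply S_eq_dist0. rewrite S_pt. unfold word_lim.
  apply (UL_sequence _ _ _ (S_dist_embS _ _)).
  apply (Un_cv_squeeze0 _ (fun n => / 2 ^ n)); [|apply Un_cv_pow_half].
  intros k. split; [apply (dist_ge0 _ G_pmet)|]. cbn [proj1_sig].
  induction k as [|k IH].
  - rewrite pow_O, Rinv_1. apply (dist_le1 _ G_pmet).
  - rewrite word_seq_S, <- gmap_pt, gmap_same, inv_pow2_S. lra.
Qed.

Section Coalgebra.
Variable X : pre3.
Variable e : car X -> car (Mtensor X).

Definition head_lab (x : car X) : Mlab := fst (qrep (e x)).
Definition tail_pt (x : car X) : car X := snd (qrep (e x)).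

(** The equation [s (h x) = (M (x) h) (e x)], read through the bijection [psi]. *)
Definition Psi_equation (h : car X -> car S3) : Prop :=
  forall x, h x = Psi (head_lab x) (h (tail_pt x)).

Lemma coalg_hom_Psi_equation h :
  (forall x, sinv (h x) = Mtmap X S3 h (e x)) -> Psi_equation h.
Proof. intros H x. rewrite <- (psi_sinv (h x)), H. apply psi_qcl. Qed.

Lemma Psi_equation_coalg_hom h :
  Psi_equation h -> forall x, sinv (h x) = Mtmap X S3 h (e x).
Proof. intros H x. apply psi_inj. rewrite psi_sinv. unfold Mtmap. rewrite psi_qcl. apply H. Qed.

Lemma Psi_equation_unique h1 h2 : Psi_equation h1 -> Psi_equation h2 -> h1 = h2.
Proof.
  intros E1 E2. apply functional_extensionality. intros x. apply S_eq_dist0.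
  apply le_inv_pow2_eq0; [apply (dist_ge0 _ S_pmet)|]. intros n. revert x.
  induction n as [|n IH]; intros x.
  - rewrite pow_O, Rinv_1. apply (dist_le1 _ S_pmet).
  - rewrite (E1 x), (E2 x), Psi_dist, tdist_same, inv_pow2_S.
    specialize (IH (tail_pt x)). lra.
Qed.

Lemma traj_S x i : traj X e x (S i) = traj X e (tail_pt x) i.
Proof. induction i as [|i IH]; [reflexivity|]. cbn [traj] in *. rewrite IH. reflexivity. Qed.

Lemma lab_S x : (fun i => lab X e x (S i)) = lab X e (tail_pt x).
Proof. apply functional_extensionality. intros i. unfold lab. rewrite traj_S. reflexivity. Qed.

Definition addr_map (z : Ipt) (x : car X) : car S3 := word_lim z (lab X e x).

Lemma addr_map_Psi_equation z : Psi_equation (addr_map z).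
Proof. intros x. unfold addr_map. rewrite <- (word_lim_cons z (lab X e x)), lab_S. reflexivity. Qed.

Lemma addr_map_vertex z m : qrep (e (pt X (vtx m))) = (m, pt X (vtx m)) ->
  addr_map z (pt X (vtx m)) = pt S3 (vtx m).
Proof.
  intros Hc. unfold addr_map.
  assert (Ht : forall n, traj X e (pt X (vtx m)) n = pt X (vtx m)).
  { induction n as [|n IH]; [reflexivity|]. cbn [traj]. rewrite IH, Hc. reflexivity. }
  replace (lab X e (pt X (vtx m))) with (fun _ : nat => m).
  - apply word_lim_const.
  - apply functional_extensionality. intros n. unfold lab. rewrite Ht, Hc. reflexivity.
Qed.

End Coalgebra.




(** * Continuity *)

Section Continuity.
Variable X : pre3.
Variable e : car X -> car (Mtensor X).
Variable f : car X -> car S3.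
Hypothesis HX : tri_pmet X.
Hypothesis He : continuous_map X (Mtensor X) e.
Hypothesis Hvert : forall m, qrep (e (pt X (vtx m))) = (m, pt X (vtx m)).
Hypothesis Hf : Psi_equation X e f.
Hypothesis Hfpt : forall m, f (pt X (vtx m)) = pt S3 (vtx m).

Definition osc_le (x : car X) (r : R) : Prop :=
  exists d, 0 < d /\ forall y, dist x y < d -> dist (f x) (f y) <= r.

Lemma e_dist_tdist x y :
  dist (e x) (e y) = tdist_on X (head_lab X e x, tail_pt X e x) (head_lab X e y, tail_pt X e y).
Proof.
  rewrite (Mtensor_dist_rep _ HX). unfold head_lab, tail_pt.
  destruct (qrep (e x)), (qrep (e y)). reflexivity.
Qed.

Lemma f_dist_tdist x y :
  dist (f x) (f y) =
  tdist_on S3 (head_lab X e x, f (tail_pt X e x)) (head_lab X e y, f (tail_pt X e y)).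
Proof. rewrite (Hf x), (Hf y) at 1. apply Psi_dist. Qed.

Lemma head_lab_vertex m : head_lab X e (pt X (vtx m)) = m.
Proof. unfold head_lab. rewrite Hvert. reflexivity. Qed.

Lemma tail_pt_vertex m : tail_pt X e (pt X (vtx m)) = pt X (vtx m).
Proof. unfold tail_pt. rewrite Hvert. reflexivity. Qed.

(** [e] maps points near the vertex [vtx m] into the copy [m] (the other copies are [1/2]
    away), where [Psi m] halves distances. *)
Lemma osc_le_vertex_half m r : osc_le (pt X (vtx m)) r -> osc_le (pt X (vtx m)) (r / 2).
Proof.
  intros [d [Hd Hnear]].
  destruct (He (pt X (vtx m)) (Rmin (1 / 4) (d / 2))) as [de [Hde Hcont]].
  { apply Rmin_glb_lt; lra. }
  exists de. split; [exact Hde|]. intros y Hy. specialize (Hcont y Hy).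
  pose proof (Rmin_l (1 / 4) (d / 2)). pose proof (Rmin_r (1 / 4) (d / 2)).
  rewrite e_dist_tdist in Hcont. rewrite f_dist_tdist. rewrite head_lab_vertex, tail_pt_vertex in *.
  destruct (Mlab_eqb_spec m (head_lab X e y)) as [Em|Hne].
  - rewrite <- Em in *. rewrite (tdist_same (@dist X) (pt X)) in Hcont. rewrite tdist_same.
    specialize (Hnear (tail_pt X e y) ltac:(lra)). lra.
  - pose proof (tdist_vertex_cross X HX m _ (tail_pt X e y) Hne). lra.
Qed.

Lemma osc_le_vertices_uniform r : (forall m, osc_le (pt X (vtx m)) r) ->
  exists d, 0 < d /\ forall m y, dist (pt X (vtx m)) y < d -> dist (pt S3 (vtx m)) (f y) <= r.
Proof.
  intros H. destruct (H ma) as [da [Ha Hna]], (H mb) as [db [Hb Hnb]], (H mc) as [dc [Hc Hnc]].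
  exists (Rmin da (Rmin db dc)). split; [repeat apply Rmin_glb_lt; assumption|].
  pose proof (Rmin_l da (Rmin db dc)). pose proof (Rmin_r da (Rmin db dc)).
  pose proof (Rmin_l db dc). pose proof (Rmin_r db dc).
  intros m y Hy. rewrite <- Hfpt. destruct m; [apply Hna | apply Hnb | apply Hnc]; lra.
Qed.

(** Near [x], either [e] stays in the copy of [x] (and the bound on the tail is halved), or
    both tails are near the common vertex of two copies (and the vertex bound applies). *)
Lemma osc_le_step r : (forall m, osc_le (pt X (vtx m)) r) -> (forall x, osc_le x (2 * r)) ->
  forall x, osc_le x r.
Proof.
  intros Hv Hq x. destruct (osc_le_vertices_uniform r Hv) as [dv [Hdv Hnv]].
  destruct (Hq (tail_pt X e x)) as [dq [Hdq Hnq]].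
  pose proof (Rmin_l dq dv). pose proof (Rmin_r dq dv). set (d0 := Rmin dq dv) in *.
  assert (Hd0 : 0 < d0) by (apply Rmin_glb_lt; assumption).
  destruct (He x (Rmin (1 / 4) (d0 / 2))) as [de [Hde Hcont]]; [apply Rmin_glb_lt; lra|].
  exists de. split; [exact Hde|]. intros y Hy. specialize (Hcont y Hy).
  pose proof (Rmin_l (1 / 4) (d0 / 2)). pose proof (Rmin_r (1 / 4) (d0 / 2)).
  rewrite e_dist_tdist in Hcont. rewrite f_dist_tdist.
  destruct (Mlab_eqb_spec (head_lab X e x) (head_lab X e y)) as [Em|Hne].
  - rewrite <- Em in *. rewrite (tdist_same (@dist X) (pt X)) in Hcont. rewrite tdist_same.
    specialize (Hnq (tail_pt X e y) ltac:(lra)). lra.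
  - rewrite (tdist_cross_lt_half X HX _ _ _ _ Hne) in Hcont by lra.
    eapply Rle_trans; [apply tdist_cross_le, Hne|].
    pose proof (dist_ge0 _ HX (pt X (vtx (head_lab X e y))) (tail_pt X e x)).
    pose proof (dist_ge0 _ HX (pt X (vtx (head_lab X e x))) (tail_pt X e y)).
    rewrite (dist_sym _ HX (tail_pt X e x)), (dist_sym _ HX (tail_pt X e y)) in Hcont.
    rewrite (dist_sym _ S_pmet (f (tail_pt X e x))), (dist_sym _ S_pmet (f (tail_pt X e y))).
    pose proof (Hnv (head_lab X e y) (tail_pt X e x) ltac:(lra)).
    pose proof (Hnv (head_lab X e x) (tail_pt X e y) ltac:(lra)).
    lra.
Qed.

Theorem Psi_equation_continuous : continuous_map X S3 f.
Proof.
  assert (H : forall n, (forall m, osc_le (pt X (vtx m)) (/ 2 ^ n)) /\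
                        (forall x, osc_le x (2 * / 2 ^ n))).
  { induction n as [|n [IHv IHq]].
    - rewrite pow_O, Rinv_1.
      assert (Hall : forall x r, 1 <= r -> osc_le x r).
      { intros x r Hr. exists 1. split; [lra|]. intros y _.
        pose proof (dist_le1 _ S_pmet (f x) (f y)). lra. }
      split; intros; apply Hall; lra.
    - rewrite inv_pow2_S. split.
      + intros m. apply osc_le_vertex_half, IHv.
      + replace (2 * (/ 2 ^ n / 2)) with (/ 2 ^ n) by lra. apply osc_le_step; assumption. }
  intros x eps Heps. destruct (inv_pow2_small eps Heps) as [n Hn].
  destruct (proj2 (H n) x) as [d [Hd Hnear]]. exists d. split; [exact Hd|].
  intros y Hy. specialize (Hnear y Hy). lra.
Qed.

End Continuity.

Theorem mainTheorem8 (X : pre3) (e : car X -> car (Mtensor X)) :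
  is_tri_met X -> morphism3 X (Mtensor X) e ->
  (forall h1 h2 : car X -> car S3,
     morphism3 X S3 h1 -> (forall x, sinv (h1 x) = Mtmap X S3 h1 (e x)) ->
     morphism3 X S3 h2 -> (forall x, sinv (h2 x) = Mtmap X S3 h2 (e x)) ->
     h1 = h2) /\
  (forall z : Ipt, exists f : car X -> car S3,
     (forall x, Un_cv (fun n => Defs.dist (theta X e z n x) (f x)) 0) /\
     morphism3 X S3 f /\
     (forall x, sinv (f x) = Mtmap X S3 f (e x)) /\
     (forall h : car X -> car S3, morphism3 X S3 h ->
        (forall x, sinv (h x) = Mtmap X S3 h (e x)) -> h = f)).
Proof.
  intros HXmet He. pose proof (is_tri_met_pmet X HXmet) as HX.
  assert (Hvert : forall m, qrep (e (pt X (vtx m))) = (m, pt X (vtx m))).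
  { intros m. rewrite (morphism3_pts _ _ e He), Mtensor_pt. apply qrep_vertex, HX. }
  split.
  - intros h1 h2 _ E1 _ E2.
    apply (Psi_equation_unique X e); apply coalg_hom_Psi_equation; assumption.
  - intros z. exists (addr_map X e z).
    pose proof (addr_map_Psi_equation X e z) as Hf.
    assert (Hfpt : forall m, addr_map X e z (pt X (vtx m)) = pt S3 (vtx m)).
    { intros m. apply addr_map_vertex, Hvert. }
    split; [|split; [|split]].
    + intros x. apply word_seq_cv.
    + split; [apply (Psi_equation_continuous X e); auto; apply He|].
      exact (conj (Hfpt ma) (conj (Hfpt mb) (Hfpt mc))).
    + apply Psi_equation_coalg_hom, Hf.
    + intros h _ Eh. apply (Psi_equation_unique X e); [apply coalg_hom_Psi_equation, Eh | exact Hf].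
Qed.
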